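(* Fix an integer $k\ge0$. For real numbers $2\le y\le x$, $$\Phi_k(x,y)=\Psi(x,P_k)+O\left(\frac{x(\log x)^{2k}}{y}\right),$$ where the implied constant depends only on $k$.
   Context: $\phi$ is Euler's function, $\phi_0(n)=n$, $\phi_{k+1}(n)=\phi(\phi_k(n))$. $\Phi_k(x,y)=\#\{n\le x:\ p\mid\phi_k(n)\Rightarrow p\le y\}$ ($p$ prime). For a set $P$ of primes, $\Psi(x,P)=\#\{n\le x:\ p\mid n\Rightarrow p\in P\}$. The sets of primes $P_k$ are defined by $P_0=\{p\le y\}$ and $P_{k+1}=\{p\le x \text{ prime}:\ q\mid p-1\Rightarrow q\in P_k\}$. *)

From Stdlib Require Import Reals.
From mathcomp Require Import all_boot.

Set Implicit Arguments.
Unset Strict Implicit.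
Unset Printing Implicit Defensive.

Definition leRb (n : nat) (r : R) : bool :=
  if Rle_dec (INR n) r then true else false.

Definition phi_iter (k n : nat) : nat := iter k totient n.

Fixpoint Pset (x y : R) (k : nat) (p : nat) : bool :=
  match k with
  | 0 => prime p && leRb p y
  | k'.+1 => [&& prime p, leRb p x & all (Pset x y k') (primes p.-1)]
  end.

Definition Phi (k : nat) (x y : R) : nat :=
  count (fun n => [&& 0 < n, leRb n x &
                      all (fun p => leRb p y) (primes (phi_iter k n))])
        (iota 0 (Z.to_nat (up x))).

Definition Psi (x : R) (P : nat -> bool) : nat :=
  count (fun n => [&& 0 < n, leRb n x & all P (primes n)])
        (iota 0 (Z.to_nat (up x))).

(* Write P_k for [Pset x y k].  If p | m then every prime q | p - 1 divides
   phi(m); hence if phi_k(n) is y-smooth, every prime factor of n lies in P_k,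
   and Phi_k(x,y) <= Psi(x,P_k).  Conversely a prime q | phi(m) satisfies
   q^2 | m or q | p - 1 for some prime p | m, so if n is counted by Psi(x,P_k)
   but not by Phi_k(x,y), then q^2 | phi_j(n) for some j < k and some prime
   q > y.  If d is a prime or a product of two
   primes and d | phi(m), then m is divisible by some w from an explicit list of
   numbers of the same kind with sum_w 1/w <= 5 (1 + log x)^2 / d; this uses
   sum_{p <= x, p = 1 mod m} 1/p <= (1 + log x) / m.  By induction on j,
   #{n <= x : d | phi_j(n)} <= x (5 (1 + log x)^2)^j / d, and summing over
   primes q > y with sum_{q > y} 1/q^2 <= 2/y gives the error term. *)

From HB Require Import structures.
From Stdlib Require Import Reals Lra Lia Psatz.
From mathcomp Require Import all_boot zify.

Set Implicit Arguments.
Unset Strict Implicit.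
Unset Printing Implicit Defensive.

(** * Prime divisors of Euler's function *)

Lemma pred_prime_gt0 p : prime p -> 0 < p.-1.
Proof. by move/prime_gt1; rewrite -subn1 subn_gt0. Qed.

Lemma totient_leq n : totient n <= n.
Proof.
rewrite totient_count_coprime.
apply: (@leq_trans (\sum_(0 <= d < n) 1)); first by apply: leq_sum => d _; apply: leq_b1.
by rewrite sum_nat_const_nat muln1 subn0.
Qed.

Lemma dvdn_pred_totient p m : p \in primes m -> p.-1 %| totient m.
Proof.
move=> pm; have m_gt0 : 0 < m by move: pm; rewrite mem_primes => /and3P[].
by rewrite totientE // (big_rem p pm) /= dvdn_mulr ?dvdn_mulr.
Qed.

Lemma dvdn_logn r m : prime r -> 0 < m -> (r %| m) = (0 < logn r m).
Proof. by move=> r_pr m_gt0; rewrite logn_gt0 mem_primes r_pr m_gt0. Qed.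

Lemma sqr_dvdn_logn r m : prime r -> 0 < m -> (r * r %| m) = (1 < logn r m).
Proof. by move=> r_pr m_gt0; rewrite mulnn pfactor_dvdn. Qed.

Lemma logn_totient r N : prime r -> 0 < N -> logn r N <= 1 ->
  logn r (totient N) = \sum_(p <- primes N) logn r p.-1.
Proof.
move=> r_pr N_gt0 le_rN1; rewrite totientE // big_seq.
rewrite (@big_morph_in _ _ [pred n | 0 < n] _ _ _ _ _ _ _ (lognM r) (logn1 r)).
- rewrite -big_seq; apply: eq_big_seq => p; rewrite mem_primes => /and3P[p_pr _ _].
  rewrite lognM ?pred_prime_gt0 ?expn_gt0 ?prime_gt0 // lognX (logn_prime r p_pr).
  case: (eqVneq r p) => [<-|_]; rewrite ?muln0 ?addn0 //= muln1.
  by case: (logn r N) le_rN1 => [|[|]]; rewrite ?addn0.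
- by move=> m n; rewrite !inE muln_gt0 => -> ->.
- by [].
- move=> p; rewrite mem_primes inE => /and3P[p_pr _ _].
  by rewrite muln_gt0 pred_prime_gt0 // expn_gt0 prime_gt0.
Qed.

Lemma sum_nat_seq_gt1 (I : eqType) (s : seq I) (F : I -> nat) :
  uniq s -> 1 < \sum_(i <- s) F i ->
  (exists2 i, i \in s & 1 < F i) \/
  exists i j, [/\ i \in s, j \in s, i != j, 0 < F i & 0 < F j].
Proof.
move=> s_uniq sum_gt1.
have /hasP[i si /andP[_ Fi_gt0]] : has (fun i => true && (F i != 0)) s.
  by rewrite -sum_nat_seq_neq0 -lt0n (leq_trans _ sum_gt1).
have [Fi_gt1|Fi_le1] := ltnP 1 (F i); first by left; exists i.
rewrite -lt0n in Fi_gt0; have Fi1 : F i = 1 by lia.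
have : \sum_(j <- s | j != i) F j != 0.
  by move: sum_gt1; rewrite (bigD1_seq i) //= Fi1 add1n ltnS lt0n.
rewrite sum_nat_seq_neq0 => /hasP[j sj /andP[ji Fj_gt0]].
by right; exists i, j; rewrite eq_sym ji Fi1 ltn0Sn lt0n.
Qed.

Lemma prime_dvd_totient r N : prime r -> 0 < N -> r %| totient N ->
  r * r %| N \/ exists2 p, p \in primes N & r %| p.-1.
Proof.
move=> r_pr N_gt0; have tN_gt0 : 0 < totient N by rewrite totient_gt0.
have [rrN|le_rN1] := ltnP 1 (logn r N); first by left; rewrite sqr_dvdn_logn.
rewrite dvdn_logn // logn_totient // lt0n sum_nat_seq_neq0 => /hasP[p pN /= rp].
right; exists p => //; move: pN; rewrite mem_primes => /and3P[p_pr _ _].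
by rewrite dvdn_logn ?pred_prime_gt0 // lt0n.
Qed.

Lemma sqr_dvd_totient r N : prime r -> 0 < N -> r * r %| totient N ->
  [\/ r * r %| N, exists2 p, p \in primes N & r * r %| p.-1
    | exists p q, [/\ p \in primes N, q \in primes N, p != q, r %| p.-1 & r %| q.-1]].
Proof.
move=> r_pr N_gt0; have tN_gt0 : 0 < totient N by rewrite totient_gt0.
have [rrN|le_rN1] := ltnP 1 (logn r N); first by constructor 1; rewrite sqr_dvdn_logn.
have pred_gt0 p : p \in primes N -> 0 < p.-1.
  by rewrite mem_primes => /and3P[p_pr _ _]; apply: pred_prime_gt0.
rewrite sqr_dvdn_logn // logn_totient //.
case/(sum_nat_seq_gt1 (primes_uniq N)) => [[p pN rrp]|[p [q [pN qN pq rp rq]]]].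
  by constructor 2; exists p; rewrite // sqr_dvdn_logn ?pred_gt0.
by constructor 3; exists p, q; rewrite !dvdn_logn ?pred_gt0.
Qed.

Lemma mul_primes_dvdn p q N : p \in primes N -> q \in primes N -> p != q -> p * q %| N.
Proof.
rewrite !mem_primes => /and3P[p_pr _ pN] /and3P[q_pr _ qN] pq.
by rewrite Gauss_dvd ?pN ?qN // prime_coprime // dvdn_prime2.
Qed.

Lemma phi_iterS k n : phi_iter k.+1 n = totient (phi_iter k n).
Proof. exact: iterS. Qed.

Lemma phi_iterSr k n : phi_iter k.+1 n = phi_iter k (totient n).
Proof. exact: iterSr. Qed.

Lemma phi_iter_leq k n : phi_iter k n <= n.
Proof. by elim: k => // k IHk; rewrite phi_iterS (leq_trans (totient_leq _)). Qed.

Lemma phi_iter_gt0 k n : (0 < phi_iter k n) = (0 < n).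
Proof. by elim: k => // k IHk; rewrite phi_iterS totient_gt0. Qed.

(** * Witnesses for divisors of Euler's function *)

Definition cong1_primes (M m : nat) : seq nat :=
  [seq p <- iota 0 M.+1 | prime p && (m %| p.-1)].

Lemma mem_cong1_primes M m p :
  (p \in cong1_primes M m) = [&& prime p, m %| p.-1 & p <= M].
Proof. by rewrite mem_filter mem_iota leq0n add0n ltnS /= andbA. Qed.

Lemma primes_cong1 M m N p : N <= M -> p \in primes N -> m %| p.-1 ->
  p \in cong1_primes M m.
Proof.
move=> NM; rewrite mem_primes mem_cong1_primes => /and3P[p_pr N_gt0 pN] mp.
by rewrite p_pr mp (leq_trans (dvdn_leq N_gt0 pN)).
Qed.

Lemma cong1_primesS M m : cong1_primes M.+1 m =
  cong1_primes M m ++ (if prime M.+1 && (m %| M) then [:: M.+1] else [::]).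
Proof. by rewrite /cong1_primes -[M.+2]addn1 iotaD filter_cat add0n /=. Qed.

Definition prime_or_semiprime (w : nat) : Prop :=
  prime w \/ exists a b, [/\ prime a, prime b & w = a * b].

Lemma prime_or_semiprime_gt0 w : prime_or_semiprime w -> 0 < w.
Proof.
by case=> [/prime_gt0|[a [b [a_pr b_pr ->]]]] //; rewrite muln_gt0 !prime_gt0.
Qed.

Definition prime_witnesses (M r : nat) : seq nat := r * r :: cong1_primes M r.

(* One list serves both [a != b] and [a = b]; if [b | a - 1] then [a * a | N]
   is caught by the witness [a * p] with [p = a]. *)
Definition semiprime_witnesses (M a b : nat) : seq nat :=
  a * b :: [seq a * p | p <- cong1_primes M b] ++ [seq b * p | p <- cong1_primes M a]
    ++ cong1_primes M (a * b) ++ [seq p * q | p <- cong1_primes M a, q <- cong1_primes M b].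

Lemma prime_witnessesP M r N : prime r -> 0 < N <= M -> r %| totient N ->
  has (dvdn^~ N) (prime_witnesses M r).
Proof.
move=> r_pr /andP[N_gt0 NM] /(prime_dvd_totient r_pr N_gt0)[rrN|[p pN rp]].
  by rewrite /= rrN.
apply/hasP; exists p; first by rewrite inE (primes_cong1 NM pN rp) orbT.
by move: pN; rewrite mem_primes => /and3P[_ _].
Qed.

Lemma semiprime_witnessesP M a b N : prime a -> prime b -> 0 < N <= M ->
  a * b %| totient N -> has (dvdn^~ N) (semiprime_witnesses M a b).
Proof.
move=> a_pr b_pr /andP[N_gt0 NM] abN; apply/hasP.
have in_cong1 m p : p \in primes N -> m %| p.-1 -> p \in cong1_primes M m.
  exact: primes_cong1.
have in_primes p : p \in primes N -> p %| N by rewrite mem_primes => /and3P[].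
have sqr_primes p : prime p -> p * p %| N -> p \in primes N.
  by move=> p_pr ppN; rewrite mem_primes p_pr N_gt0 (dvdn_trans (dvdn_mulr _ _) ppN).
case: (eqVneq a b) abN => [<-{b_pr} aaN|ab abN].
  case: (sqr_dvd_totient a_pr N_gt0 aaN) => [aaN'|[p pN aap]|[p [q [pN qN pq ap aq]]]].
  - by exists (a * a); rewrite ?mem_head.
  - by exists p; rewrite ?in_primes // /semiprime_witnesses !(inE, mem_cat) in_cong1 ?orbT.
  exists (p * q); last exact: mul_primes_dvdn.
  by rewrite /semiprime_witnesses !(inE, mem_cat) allpairs_f ?orbT // in_cong1.
have dvd_tot d : d %| a * b -> d %| totient N by move/dvdn_trans; apply.
case: (prime_dvd_totient a_pr N_gt0 (dvd_tot _ (dvdn_mulr _ (dvdnn a)))) => [aaN|[p pN ap]];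
case: (prime_dvd_totient b_pr N_gt0 (dvd_tot _ (dvdn_mull _ (dvdnn b)))) => [bbN|[q qN bq]].
- exists (a * b); first exact: mem_head.
  by apply: mul_primes_dvdn => //; apply: sqr_primes.
- exists (a * q); first by rewrite /semiprime_witnesses !(inE, mem_cat) map_f ?orbT // in_cong1.
  have [<-//|aq] := eqVneq a q.
  by apply: mul_primes_dvdn => //; apply: sqr_primes.
- exists (b * p); first by rewrite /semiprime_witnesses !(inE, mem_cat) map_f ?orbT // in_cong1.
  have [<-//|bp] := eqVneq b p.
  by apply: mul_primes_dvdn => //; apply: sqr_primes.
case: (eqVneq p q) bq => [<-{qN} bp|pq bq].
  have abp : a * b %| p.-1 by rewrite Gauss_dvd ?ap ?bp // prime_coprime // dvdn_prime2.
  exists p; last exact: in_primes.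
  by rewrite /semiprime_witnesses !(inE, mem_cat) in_cong1 ?orbT.
exists (p * q); last exact: mul_primes_dvdn.
by rewrite /semiprime_witnesses !(inE, mem_cat) allpairs_f ?orbT // in_cong1.
Qed.

Lemma prime_witnesses_prime_or_semiprime M r : prime r ->
  {in prime_witnesses M r, forall v, prime_or_semiprime v}.
Proof.
move=> r_pr v; rewrite inE mem_cong1_primes => /predU1P[->|/and3P[v_pr _ _]].
  by right; exists r, r.
by left.
Qed.

Lemma semiprime_witnesses_prime_or_semiprime M a b : prime a -> prime b ->
  {in semiprime_witnesses M a b, forall v, prime_or_semiprime v}.
Proof.
move=> a_pr b_pr v; rewrite inE !mem_cat.
have cong1_pr m p : p \in cong1_primes M m -> prime p.
  by rewrite mem_cong1_primes => /and3P[].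
case/predU1P => [->|/or4P[/mapP[p /cong1_pr p_pr ->]|/mapP[p /cong1_pr p_pr ->]|/cong1_pr|]].
- by right; exists a, b.
- by right; exists a, p.
- by right; exists b, p.
- by left.
by case/allpairsP=> -[p q] /= [/cong1_pr p_pr /cong1_pr q_pr ->]; right; exists p, q.
Qed.

Lemma sub_in_count (T : eqType) (a1 a2 : pred T) (s : seq T) :
  {in s, subpred a1 a2} -> count a1 s <= count a2 s.
Proof.
elim: s => //= x s IHs sub12; apply: leq_add; last first.
  by apply: IHs => y sy; apply: sub12; rewrite inE sy orbT.
by case a1x: (a1 x); rewrite // sub12 ?mem_head.
Qed.

Lemma count_has_leq (T I : Type) (P : I -> pred T) (ws : seq I) (s : seq T) :
  count (fun x => has (P^~ x) ws) s <= \sum_(w <- ws) count (P w) s.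
Proof.
elim: ws => [|w ws IHws]; first by rewrite big_nil; elim: s.
rewrite big_cons (leq_trans _ (leq_add (leqnn _) IHws)) // -count_predUI.
exact: leq_addr.
Qed.

Definition count_phi (M k : nat) (D : pred nat) : nat :=
  count (fun n => D (phi_iter k n)) (iota 1 M).

Lemma count_phi0_dvdn M d : 0 < d -> count_phi M 0 (dvdn d) = M %/ d.
Proof.
move=> d_gt0; elim: M => [|M IHM]; first by rewrite div0n.
rewrite /count_phi -[M.+1]addn1 iotaD count_cat -/(count_phi M 0 _) IHM /=.
by rewrite addn0 add1n addn1 divnS // addnC.
Qed.

Lemma count_phiS_leq M k (D : pred nat) (ws : seq nat) :
  (forall N, 0 < N <= M -> D (totient N) -> has (dvdn^~ N) ws) ->
  count_phi M k.+1 D <= \sum_(w <- ws) count_phi M k (dvdn w).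
Proof.
move=> cover; apply: leq_trans (count_has_leq (fun w n => w %| phi_iter k n) _ _).
apply: sub_in_count => n; rewrite mem_iota add1n ltnS => /andP[n_gt0 nM] /=.
apply: cover.
by rewrite phi_iter_gt0 n_gt0 (leq_trans (phi_iter_leq _ _)).
Qed.

Definition large_primes (M : nat) (y : R) : seq nat :=
  [seq q <- iota 0 M.+1 | prime q && ~~ leRb q y].

Definition has_large_square (M k : nat) (y : R) (n : nat) : bool :=
  has (fun j => has (fun q => q * q %| phi_iter j n) (large_primes M y)) (iota 0 k).

Lemma count_large_square_leq M k y :
  count (has_large_square M k y) (iota 1 M) <=
  \sum_(j <- iota 0 k) \sum_(q <- large_primes M y) count_phi M j (dvdn (q * q)).
Proof.
apply: leq_trans (count_has_leq _ _ _) _; apply: leq_sum => j _.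
exact: count_has_leq.
Qed.

Lemma has_large_squareN M k y n : 0 < n <= M -> ~~ has_large_square M k y n ->
  forall j q, j < k -> prime q -> q * q %| phi_iter j n -> leRb q y.
Proof.
move=> /andP[n_gt0 nM] /hasPn small j q jk q_pr qq; apply/negPn/negP => q_large.
have j_in : j \in iota 0 k by rewrite mem_iota add0n jk.
have q_in : q \in large_primes M y.
  rewrite mem_filter q_pr q_large mem_iota add0n ltnS /=.
  have phi_gt0 : 0 < phi_iter j n by rewrite phi_iter_gt0.
  rewrite (leq_trans (leq_pmulr q (prime_gt0 q_pr))) // (leq_trans (dvdn_leq phi_gt0 qq)) //.
  exact: leq_trans (phi_iter_leq _ _) nM.
by move: (small j j_in) => /hasPn/(_ q q_in)/negP.
Qed.

(** * Sums of reciprocals *)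

Local Open Scope R_scope.

HB.instance Definition _ := Monoid.isComLaw.Build R 0 Rplus
  (fun x y z => esym (Rplus_assoc x y z)) Rplus_comm Rplus_0_l.

Notation "\sum_ ( i <- r ) F" := (\big[Rplus/0]_(i <- r) F) : R_scope.

Lemma INR_sum (I : Type) (s : seq I) (F : I -> nat) :
  INR (\sum_(i <- s) F i)%N = \sum_(i <- s) INR (F i).
Proof. exact: (big_morph INR plus_INR). Qed.

Lemma Rsum_le (I : eqType) (s : seq I) (F G : I -> R) :
  (forall i, i \in s -> F i <= G i) -> \sum_(i <- s) F i <= \sum_(i <- s) G i.
Proof.
move=> leFG; rewrite !big_seq.
by apply: (big_ind2 Rle) => [|? ? ? ?|]; [lra | lra | apply: leFG].
Qed.

Lemma Rsum_ge0 (I : Type) (s : seq I) (F : I -> R) :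
  (forall i, 0 <= F i) -> 0 <= \sum_(i <- s) F i.
Proof. by move=> F_ge0; apply: (big_ind (Rle 0)) => // [|? ?]; lra. Qed.

Lemma Rsum_mull (I : Type) (s : seq I) (F : I -> R) c :
  \sum_(i <- s) c * F i = c * \sum_(i <- s) F i.
Proof. by rewrite (big_morph (Rmult c) (Rmult_plus_distr_l c) (Rmult_0_r c)). Qed.

Lemma Rsum_const (I : Type) (s : seq I) c : \sum_(i <- s) c = INR (size s) * c.
Proof.
elim: s => [|i s IHs]; first by rewrite big_nil /=; ring.
by rewrite big_cons IHs (S_INR (size s)); ring.
Qed.

Lemma INR_pos n : (0 < n)%N -> 0 < INR n.
Proof. by move=> n_gt0; apply: lt_0_INR; apply/ltP. Qed.

Lemma inv_INR_ge0 n : 0 <= / INR n.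
Proof.
by case: n => [|n]; [rewrite Rinv_0; lra | apply/Rlt_le/Rinv_0_lt_compat/INR_pos].
Qed.

Lemma inv_prime_le1 p : prime p -> / INR p <= 1.
Proof.
move=> p_pr; rewrite -Rinv_1; apply: Rinv_le_contravar; first lra.
by apply: (le_INR 1); apply/leP; apply: prime_gt0.
Qed.

Lemma INR_divn_le m d : (0 < d)%N -> INR (m %/ d) <= INR m / INR d.
Proof.
move=> d_gt0; have d_pos := INR_pos d_gt0.
apply: (Rmult_le_reg_r (INR d)) => //; rewrite /Rdiv Rmult_assoc Rinv_l; last lra.
by rewrite Rmult_1_r -mult_INR; apply: le_INR; apply/leP; rewrite multE leq_divM.
Qed.

Lemma Rsum_inv_ge0 (s : seq nat) : 0 <= \sum_(n <- s) / INR n.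
Proof. by apply: Rsum_ge0 => n; apply: inv_INR_ge0. Qed.

Lemma sum_inv_mull (s : seq nat) a :
  \sum_(p <- s) / INR (a * p) = / INR a * \sum_(p <- s) / INR p.
Proof. by rewrite -Rsum_mull; apply: eq_bigr => p _; rewrite mult_INR Rinv_mult. Qed.

Lemma sum_inv_allpairs (s t : seq nat) :
  \sum_(p <- s) \sum_(q <- t) / INR (p * q) =
  (\sum_(p <- s) / INR p) * \sum_(q <- t) / INR q.
Proof.
rewrite Rmult_comm -Rsum_mull; apply: eq_bigr => p _.
by rewrite sum_inv_mull Rmult_comm.
Qed.

Lemma ln_le x y : 0 < x -> x <= y -> ln x <= ln y.
Proof. by move=> x_gt0 [/(ln_increasing _ _ x_gt0)|->]; lra. Qed.

Lemma ln_nat_ge0 n : (0 < n)%N -> 0 <= ln (INR n).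
Proof. by move=> n_gt0; rewrite -ln_1; apply: ln_le; [lra | apply: (le_INR 1); apply/leP]. Qed.

(* [exp z >= 1 + z] at [z = - / (T + 1)]. *)
Lemma ln_succ_ge T : (0 < T)%N -> ln (INR T) + / INR T.+1 <= ln (INR T.+1).
Proof.
move=> T_gt0; have T_pos := INR_pos T_gt0; have T1_pos := INR_pos (ltn0Sn T).
have := exp_ineq1_le (- / INR T.+1).
have -> : 1 + - / INR T.+1 = INR T / INR T.+1 by rewrite S_INR; field; lra.
move=> /(ln_le (Rdiv_lt_0_compat _ _ T_pos T1_pos)); rewrite ln_exp.
rewrite /Rdiv ln_mult ?ln_Rinv //; [lra | exact: Rinv_0_lt_compat].
Qed.

Definition harmonic (T : nat) : R := \sum_(t <- iota 1 T) / INR t.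

Lemma harmonicS T : harmonic T.+1 = harmonic T + / INR T.+1.
Proof. by rewrite /harmonic -[T.+1]addn1 iotaD big_cat /= big_seq1 add1n addn1. Qed.

Lemma harmonic_le T : (0 < T)%N -> harmonic T <= 1 + ln (INR T).
Proof.
elim: T => // -[_ _|T IHT _]; first by rewrite harmonicS /harmonic big_nil ln_1 /=; lra.
by rewrite harmonicS; have := ln_succ_ge (ltn0Sn T); have := IHT (ltn0Sn T); lra.
Qed.

Lemma sum_inv_cong1_primes_harmonic m U : (0 < m)%N ->
  \sum_(p <- cong1_primes U.+1 m) / INR p <= harmonic (U %/ m) / INR m.
Proof.
move=> m_gt0; have m_pos := INR_pos m_gt0.
elim: U => [|U IHU]; first by rewrite div0n /harmonic big_nil /Rdiv Rmult_0_l; lra.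
rewrite cong1_primesS big_cat /= divnS //.
case: (boolP (m %| U.+1)) => [mU|_]; last by rewrite andbF big_nil add0n Rplus_0_r.
rewrite andbT add1n harmonicS /Rdiv Rmult_plus_distr_r -Rinv_mult.
have -> : INR (U %/ m).+1 * INR m = INR U.+1.
  by rewrite -mult_INR multE (_ : (U %/ m).+1 = U.+1 %/ m) ?divnK // divnS // mU.
suff : (if prime U.+2 then \sum_(p <- [:: U.+2]) / INR p else 0) <= / INR U.+1.
  by case: (prime _); rewrite ?big_nil; lra.
case: (prime _); last by have := Rinv_0_lt_compat _ (INR_pos (ltn0Sn U)); lra.
rewrite big_seq1; apply: Rinv_le_contravar; first exact: INR_pos.
by apply: le_INR; apply/leP.
Qed.

Lemma sum_inv_cong1_primes M m : (0 < m)%N -> (0 < M)%N ->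
  \sum_(p <- cong1_primes M m) / INR p <= (1 + ln (INR M)) / INR m.
Proof.
case: M => // U m_gt0 _; apply: Rle_trans (sum_inv_cong1_primes_harmonic U m_gt0) _.
apply: Rmult_le_compat_r; first exact: inv_INR_ge0.
have lnU_ge0 := ln_nat_ge0 (ltn0Sn U).
have [->|T_gt0] := posnP (U %/ m); first by rewrite /harmonic big_nil; lra.
apply: Rle_trans (harmonic_le T_gt0) _; apply: Rplus_le_compat_l.
by apply: ln_le; [exact: INR_pos | apply: le_INR; apply/leP; rewrite (leq_trans (leq_div _ _))].
Qed.

Lemma leRbP n r : reflect (INR n <= r) (leRb n r).
Proof. by rewrite /leRb; case: Rle_dec => h; constructor. Qed.

(* The terms [1/n^2 <= 2/n - 2/(n+1)] telescope; the [Rmax] makes the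
   invariant hold also while [U <= y]. *)
Lemma sum_inv_sqr_large_le (P : pred nat) y U : 0 < y ->
  \sum_(n <- [seq n <- iota 0 U | P n && ~~ leRb n y]) / (INR n * INR n)
    <= 2 / y - 2 / Rmax y (INR U).
Proof.
move=> y_pos; elim: U => [|U IHU]; first by rewrite big_nil Rmax_left /=; [lra | lra].
rewrite -[U.+1]addn1 iotaD filter_cat big_cat add0n /=.
have max_pos : 0 < Rmax y (INR U) by apply: Rlt_le_trans (Rmax_l _ _).
case: ifP => [/andP[_ /leRbP yU]|_]; last first.
  rewrite big_nil Rplus_0_r; apply: Rle_trans IHU _.
  suff : / Rmax y (INR (U + 1)) <= / Rmax y (INR U) by rewrite /Rdiv; lra.
  apply: Rinv_le_contravar => //; apply: Rmax_lub; first exact: Rmax_l.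
  by apply: Rle_trans (Rmax_r _ _); rewrite plus_INR; simpl; lra.
have yU' : y <= INR U by lra.
rewrite big_seq1 !Rmax_right ?plus_INR /= in IHU * => //; last lra.
have U_ge1 : 1 <= INR U.
  by case: U yU {IHU yU' max_pos} => [/=|U _]; [lra | rewrite S_INR; have := pos_INR U; lra].
have : 2 / INR U - 2 / (INR U + 1) - / (INR U * INR U)
         = (INR U - 1) / (INR U * INR U * (INR U + 1)) by field; lra.
have : 0 <= (INR U - 1) / (INR U * INR U * (INR U + 1)).
  by apply: Rmult_le_pos; [lra | apply/Rlt_le/Rinv_0_lt_compat; nra].
lra.
Qed.

(** * Integers n <= M with d | phi_k(n) *)

Definition dvd_growth (M : nat) : R := 5 * (1 + ln (INR M)) ^ 2.

Lemma dvd_growth_ge1 M : (0 < M)%N -> 1 <= dvd_growth M.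
Proof.
move=> M_gt0; have := ln_nat_ge0 M_gt0; rewrite /dvd_growth => ln_ge0.
have : 1 <= (1 + ln (INR M)) ^ 2 by simpl; nra.
lra.
Qed.

Section CountPhiDvdn.

Variable M : nat.
Hypothesis M_gt0 : (0 < M)%N.

Let S := 1 + ln (INR M).

Let S_ge1 : 1 <= S.
Proof. by have := ln_nat_ge0 M_gt0; rewrite /S; lra. Qed.

Let sum_cong1 m : (0 < m)%N -> \sum_(p <- cong1_primes M m) / INR p <= S * / INR m.
Proof. by move=> m_gt0; apply: sum_inv_cong1_primes. Qed.

Lemma sum_inv_prime_witnesses r : prime r ->
  \sum_(w <- prime_witnesses M r) / INR w <= dvd_growth M / INR r.
Proof.
move=> r_pr; rewrite big_cons mult_INR Rinv_mult /dvd_growth -/S /Rdiv.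
have := sum_cong1 (prime_gt0 r_pr); have := inv_prime_le1 r_pr.
have := inv_INR_ge0 r; set x := / INR r => x_ge0 x_le1 sum_le.
have : x * x <= x by nra.
have : x <= S * x by nra.
have : S * x <= S ^ 2 * x by apply: Rmult_le_compat_r => //; nra.
have : 0 <= S ^ 2 * x by nra.
lra.
Qed.

Lemma sum_inv_semiprime_witnesses a b : prime a -> prime b ->
  \sum_(w <- semiprime_witnesses M a b) / INR w <= dvd_growth M / INR (a * b).
Proof.
move=> a_pr b_pr; rewrite /semiprime_witnesses big_cons !big_cat /= !big_map.
rewrite big_allpairs_dep /= !sum_inv_mull sum_inv_allpairs mult_INR Rinv_mult.
rewrite /dvd_growth -/S /Rdiv Rinv_mult.
have ab_gt0 : (0 < a * b)%N by rewrite muln_gt0 !prime_gt0.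
have := sum_cong1 ab_gt0; rewrite mult_INR Rinv_mult.
have := sum_cong1 (prime_gt0 b_pr); have := sum_cong1 (prime_gt0 a_pr).
have := Rsum_inv_ge0 (cong1_primes M b); have := Rsum_inv_ge0 (cong1_primes M a).
have := inv_INR_ge0 b; have := inv_INR_ge0 a.
set x := / INR a; set y := / INR b.
set A := \sum_(p <- _ M a) _; set B := \sum_(p <- _ M b) _.
move=> x_ge0 y_ge0 A_ge0 B_ge0 A_le B_le C_le.
have xy_ge0 : 0 <= x * y by nra.
have : x * B <= S * (x * y) by nra.
have : y * A <= S * (x * y) by nra.
have : A * B <= S ^ 2 * (x * y).
  have -> : S ^ 2 * (x * y) = (S * x) * (S * y) by ring.
  by apply: Rmult_le_compat.
have S_le_S2 : S <= S ^ 2 by nra.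
have : S * (x * y) <= S ^ 2 * (x * y) by apply: Rmult_le_compat_r.
have : x * y <= S * (x * y) by rewrite -{1}[x * y]Rmult_1_l; apply: Rmult_le_compat_r.
lra.
Qed.

Lemma dvdn_totient_witnesses w : prime_or_semiprime w -> exists ws : seq nat,
  [/\ {in ws, forall v, prime_or_semiprime v},
      forall N, (0 < N <= M)%N -> w %| totient N -> has (dvdn^~ N) ws &
      \sum_(v <- ws) / INR v <= dvd_growth M / INR w].
Proof.
case=> [w_pr|[a [b [a_pr b_pr ->]]]].
  exists (prime_witnesses M w); split; first exact: prime_witnesses_prime_or_semiprime.
    by move=> N; apply: prime_witnessesP.
  exact: sum_inv_prime_witnesses.
exists (semiprime_witnesses M a b); split.
- exact: semiprime_witnesses_prime_or_semiprime.
- by move=> N; apply: semiprime_witnessesP.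
exact: sum_inv_semiprime_witnesses.
Qed.

Lemma count_phi_dvdn_le k w : prime_or_semiprime w ->
  INR (count_phi M k (dvdn w)) <= INR M * dvd_growth M ^ k / INR w.
Proof.
elim: k w => [|k IHk] w w_ok.
  rewrite count_phi0_dvdn ?prime_or_semiprime_gt0 // pow_O Rmult_1_r.
  exact/INR_divn_le/prime_or_semiprime_gt0.
have [ws [ws_ok cover sum_le]] := dvdn_totient_witnesses w_ok.
apply: Rle_trans (le_INR _ _ (leP (count_phiS_leq k cover))) _.
rewrite INR_sum; apply: Rle_trans (Rsum_le (G := fun v => INR M * dvd_growth M ^ k * / INR v) _) _.
  by move=> v /ws_ok; apply: IHk.
have growth_ge0 := Rle_trans _ _ _ Rle_0_1 (dvd_growth_ge1 M_gt0).
rewrite Rsum_mull; apply: Rle_trans (Rmult_le_compat_l _ _ _ _ sum_le) _.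
  by apply: Rmult_le_pos; [exact: pos_INR | exact: pow_le].
by right; rewrite /= /Rdiv; ring.
Qed.

End CountPhiDvdn.

Lemma count_large_square_le M k y : (0 < M)%N -> 0 < y ->
  INR (count (has_large_square M k y) (iota 1 M)) <=
  2 * INR k * INR M * dvd_growth M ^ k / y.
Proof.
move=> M_gt0 y_pos; apply: Rle_trans (le_INR _ _ (leP (count_large_square_leq M k y))) _.
have growth_ge1 := dvd_growth_ge1 M_gt0.
have sum_sqr : \sum_(q <- large_primes M y) / INR (q * q) <= 2 / y.
  rewrite /large_primes; under eq_bigr do rewrite mult_INR.
  apply: Rle_trans (sum_inv_sqr_large_le _ _ y_pos) _.
  suff : 0 <= 2 / Rmax y (INR M.+1) by lra.
  by apply: Rmult_le_pos; [lra | apply/Rlt_le/Rinv_0_lt_compat/(Rlt_le_trans _ _ _ y_pos)/Rmax_l].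
rewrite INR_sum; apply: Rle_trans (Rsum_le (G := fun _ => INR M * dvd_growth M ^ k * (2 / y)) _) _.
  move=> j; rewrite mem_iota add0n => /andP[_ jk]; rewrite INR_sum.
  apply: Rle_trans (Rsum_le (G := fun q => INR M * dvd_growth M ^ j * / INR (q * q)) _) _.
    move=> q; rewrite mem_filter => /andP[/andP[q_pr _] _].
    by apply: count_phi_dvdn_le => //; right; exists q, q.
  rewrite Rsum_mull; apply: Rmult_le_compat => //.
  - by apply: Rmult_le_pos; [exact: pos_INR | apply: pow_le; lra].
  - by apply: Rsum_ge0 => q; apply: inv_INR_ge0.
  apply: Rmult_le_compat_l; first exact: pos_INR.
  by apply: Rle_pow => //; apply/leP; apply: ltnW.
by rewrite Rsum_const size_iota; right; rewrite /Rdiv; ring.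
Qed.

Lemma dvd_growth_le_ln x M : 2 <= x -> (0 < M)%N -> INR M <= x ->
  dvd_growth M <= 45 * ln x ^ 2.
Proof.
move=> x_ge2 M_gt0 Mx; have := ln_nat_ge0 M_gt0.
have : ln (INR M) <= ln x by apply: ln_le; [exact: INR_pos | exact: Mx].
have : / 2 < ln x by have := ln_lt_2; have := ln_le Rlt_0_2 x_ge2; lra.
rewrite /dvd_growth /=; nra.
Qed.

Lemma count_large_square_le_ln x y k M : 2 <= y -> y <= x -> (0 < M)%N -> INR M <= x ->
  INR (count (has_large_square M k y) (iota 1 M)) <=
  2 * INR k * 45 ^ k * (x * ln x ^ (2 * k) / y).
Proof.
move=> y_ge2 yx M_gt0 Mx.
apply: Rle_trans (count_large_square_le k M_gt0 (Rlt_le_trans _ _ _ Rlt_0_2 y_ge2)) _.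
have growth_ge0 := Rle_trans _ _ _ Rle_0_1 (dvd_growth_ge1 M_gt0).
have growth_le := dvd_growth_le_ln (Rle_trans _ _ _ y_ge2 yx) M_gt0 Mx.
have main_le : INR M * dvd_growth M ^ k <= x * (45 ^ k * ln x ^ (2 * k)).
  rewrite pow_mult -Rpow_mult_distr; apply: Rmult_le_compat => //; first exact: pos_INR.
    exact: pow_le.
  exact: pow_incr.
have c_ge0 : 0 <= 2 * INR k / y.
  by apply: Rmult_le_pos; [have := pos_INR k; lra | apply/Rlt_le/Rinv_0_lt_compat; lra].
have := Rmult_le_compat_l _ _ _ c_ge0 main_le.
by rewrite /Rdiv; lra.
Qed.

(** * The prime sets P_k *)

Lemma Pset0_sub x y k p : y <= x -> Pset x y 0 p -> Pset x y k p.
Proof.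
move=> yx; elim: k p => // k IHk p /andP[p_pr /leRbP py].
apply/and3P; split => //; first by apply/leRbP; lra.
apply/allP => q; rewrite mem_primes => /and3P[q_pr p1_gt0 qp1].
apply: IHk; rewrite /= q_pr; apply/leRbP; apply: Rle_trans py; apply: le_INR; apply/leP.
by rewrite (leq_trans (dvdn_leq p1_gt0 qp1)) // leq_pred.
Qed.

Lemma Pset_of_totient x y k m : (0 < m)%N -> INR m <= x ->
  all (Pset x y k) (primes (totient m)) -> all (Pset x y k.+1) (primes m).
Proof.
move=> m_gt0 mx /allP Ptot; apply/allP => p pm; have := pm.
rewrite mem_primes => /and3P[p_pr _ pdvd]; apply/and3P; split => //.
  by apply/leRbP; apply: Rle_trans mx; apply/le_INR/leP/dvdn_leq.
apply/allP => q; rewrite mem_primes => /and3P[q_pr _ qp1]; apply: Ptot.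
by rewrite mem_primes q_pr totient_gt0 m_gt0 (dvdn_trans qp1 (dvdn_pred_totient pm)).
Qed.

Lemma Pset_totient x y k m : y <= x -> (0 < m)%N ->
  all (Pset x y k.+1) (primes m) -> (forall q, prime q -> q * q %| m -> leRb q y) ->
  all (Pset x y k) (primes (totient m)).
Proof.
move=> yx m_gt0 /allP Pm small_sq; apply/allP => q; rewrite mem_primes => /and3P[q_pr _ qtot].
case: (prime_dvd_totient q_pr m_gt0 qtot) => [qqm|[p pm qp1]].
  by apply: Pset0_sub; rewrite //= q_pr small_sq.
have /and3P[_ _ /allP] := Pm p pm; apply.
by rewrite mem_primes q_pr qp1 pred_prime_gt0 //; move: pm; rewrite mem_primes => /andP[].
Qed.

Lemma Pset_of_smooth_phi_iter x y k n : (0 < n)%N -> INR n <= x ->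
  all (leRb^~ y) (primes (phi_iter k n)) -> all (Pset x y k) (primes n).
Proof.
elim: k n => [|k IHk] n n_gt0 nx smooth.
  by apply/allP => p pn; rewrite /= (allP smooth) // andbT; move: pn; rewrite mem_primes => /andP[].
apply: Pset_of_totient => //; apply: IHk; rewrite ?totient_gt0 -?phi_iterSr //.
by apply: Rle_trans nx; apply/le_INR/leP/totient_leq.
Qed.

Lemma smooth_phi_iter_of_Pset x y k n : y <= x -> (0 < n)%N ->
  all (Pset x y k) (primes n) ->
  (forall j q, (j < k)%N -> prime q -> q * q %| phi_iter j n -> leRb q y) ->
  all (leRb^~ y) (primes (phi_iter k n)).
Proof.
move=> yx; elim: k n => [|k IHk] n n_gt0 Pn small_sq.
  by apply/allP => p /(allP Pn) /andP[].
rewrite phi_iterSr; apply: IHk; rewrite ?totient_gt0 //.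
  by apply: Pset_totient => // q; apply: (small_sq 0%N).
by move=> j q jk; rewrite -phi_iterSr; apply: small_sq.
Qed.

Lemma count_smooth_le_Pset x y k M : INR M <= x ->
  (count (fun n => all (leRb^~ y) (primes (phi_iter k n))) (iota 1 M) <=
   count (fun n => all (Pset x y k) (primes n)) (iota 1 M))%N.
Proof.
move=> Mx; apply: sub_in_count => n; rewrite mem_iota add1n ltnS => /andP[n_gt0 nM].
by apply: Pset_of_smooth_phi_iter => //; apply: Rle_trans Mx; apply/le_INR/leP.
Qed.

Lemma count_Pset_le_smooth x y k M : y <= x ->
  (count (fun n => all (Pset x y k) (primes n)) (iota 1 M) <=
   count (fun n => all (leRb^~ y) (primes (phi_iter k n))) (iota 1 M) +
   count (has_large_square M k y) (iota 1 M))%N.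
Proof.
move=> yx; rewrite -count_predUI (leq_trans _ (leq_addr _ _)) //; apply: sub_in_count => n.
rewrite mem_iota add1n ltnS => n_range Pn; apply/orP.
have [|/(has_large_squareN n_range) small] := boolP (has_large_square M k y n).
  by right.
by left; apply: (smooth_phi_iter_of_Pset yx _ Pn small); case/andP: n_range.
Qed.

Lemma leRb_up x n : leRb n x = (n < Z.to_nat (up x))%N.
Proof.
have [up_gt up_le] := archimed x.
apply/leRbP/ltP => [nx|nN]; last rewrite INR_IZR_INZ.
  have /lt_IZR : IZR (Z.of_nat n) < IZR (up x) by rewrite -INR_IZR_INZ; lra.
  lia.
have /IZR_le : (Z.of_nat n <= up x - 1)%Z by lia.
rewrite minus_IZR /=; lra.
Qed.

Lemma count_iota_up x (P : pred nat) :
  count (fun n => [&& (0 < n)%N, leRb n x & P n]) (iota 0 (Z.to_nat (up x))) =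
  count P (iota 1 (Z.to_nat (up x)).-1).
Proof.
move: (leRb_up x); case: (Z.to_nat (up x)) => [//|N] le_up /=.
apply: eq_in_count => n; rewrite mem_iota => /andP[n_gt0 nN].
by rewrite n_gt0 le_up -add1n nN.
Qed.

Theorem proposition1 (k : nat) :
  exists C : R, forall x y : R, 2 <= y -> y <= x ->
    Rabs (INR (Phi k x y) - INR (Psi x (Pset x y k)))
      <= C * (x * ln x ^ (2 * k)%nat / y).
Proof.
exists (2 * INR k * 45 ^ k) => x y y_ge2 yx.
rewrite /Phi /Psi !count_iota_up; set M := (Z.to_nat (up x)).-1.
have M_gt0 : (0 < M)%N by rewrite /M ltn_predRL -leRb_up; apply/leRbP; simpl; lra.
have Mx : INR M <= x by apply/leRbP; rewrite leRb_up ltn_predL (leq_trans M_gt0) ?leq_pred.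
have := count_large_square_le_ln k y_ge2 yx M_gt0 Mx.
move: (count_smooth_le_Pset y k Mx) (count_Pset_le_smooth k M yx).
move=> /leP/le_INR Phi_le /leP/le_INR; rewrite plus_INR => Psi_le large_le.
by rewrite Rabs_left1; lra.
Qed.
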